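(* Let $q>0$. For $t>1$, $z\in(-1,1)$ put $K(t,z)=\frac{t^2+2tz+1}{(z+t)^2}$ and $\tilde J(-q,q,t,z)=(z+t)^2\big[K(t,z)^{2/q}-1\big]$. Then for every $t>1$ and $z\in(-1,1)$: $\frac{\partial\tilde J}{\partial t}(-q,q,t,z)<0$ if $0<q<2$, and $\frac{\partial\tilde J}{\partial t}(-q,q,t,z)>0$ if $q>2$. Moreover, for every $r>1$: $\frac{\partial\Theta}{\partial r}(-q,q,r)<0$ if $0<q<2$, and $\frac{\partial\Theta}{\partial r}(-q,q,r)>0$ if $q>2$.
   Context: For $p<q$, $p,q\ne0$, $r>1$, $\Theta(p,q,r)=\int_1^r\Big(\big(\frac{r^p-r^q}{r^p-1}+\frac{r^q-1}{r^p-1}x^p\big)^{2/q}-x^2\Big)^{-1/2}dx$. With $\beta_0=\frac{2q-p}{3}$ and $t=\frac{r^{\beta_0}+1}{r^{\beta_0}-1}$, one has $\Theta(p,q,r)=\int_{-1}^1\frac{dz}{\beta_0\sqrt{\tilde J(p,q,t,z)}}$ (for $p=-q$, $\beta_0=q$). *)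

From Stdlib Require Import Reals.
From Coquelicot Require Import Coquelicot.
Open Scope R_scope.

Definition Kfun (t z : R) : R := (t ^ 2 + 2 * t * z + 1) / (z + t) ^ 2.

Definition Jtilde_mq (q t z : R) : R :=
  (z + t) ^ 2 * (Rpower (Kfun t z) (2 / q) - 1).

Definition Theta_integrand (p q r x : R) : R :=
  / sqrt (Rpower ((Rpower r p - Rpower r q) / (Rpower r p - 1)
                  + (Rpower r q - 1) / (Rpower r p - 1) * Rpower x p) (2 / q)
          - x ^ 2).

(* Theta(p,q,r) = int_1^r Theta_integrand dx, as an improper Riemann integral
   (the integrand blows up at both endpoints x = 1 and x = r). *)
Definition Theta (p q r : R) : R :=
  RInt_gen (Theta_integrand p q r) (at_right 1) (at_left r).

From Stdlib Require Import Reals Lra.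
From Coquelicot Require Import Coquelicot.
Open Scope R_scope.

(* Put c = 2/q, so that q < 2 iff c > 1.  For w > -1,
     (1 + w)^c - 1 = w Phi_c(w),   Phi_c(w) = c \int_0^1 (1 + t w)^(c-1) dt,
   and Phi_c'(w) = c (c - 1) \int_0^1 t (1 + t w)^(c-2) dt has the sign of c - 1.
   (i) As K(t,z) - 1 = (1 - z^2)/(z + t)^2, we get J~ = (1 - z^2) Phi_c((1 - z^2)/(z + t)^2),
   whose argument decreases in t.
   (ii) With s = r^q, the substitution x^q = 1 + (s - 1) sin^2 phi maps (0, pi/2) onto (1, r)
   and turns Theta(-q,q,r) into \int_0^(pi/2) c / sqrt(Phi_c(W(s,phi))) dphi, where
   W = ((s - 1) sin phi cos phi / (1 + (s - 1) sin^2 phi))^2 increases in s; differentiating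
   under the integral sign gives the sign of dTheta/dr. *)

Lemma Rpower_pos x e : 0 < Rpower x e.
Proof. apply exp_pos. Qed.

Lemma Rpower_1_l e : Rpower 1 e = 1.
Proof. unfold Rpower. rewrite ln_1, Rmult_0_r. apply exp_0. Qed.

Lemma Rpower_gt_1 x e : 1 < x -> 0 < e -> 1 < Rpower x e.
Proof. intros Hx He. rewrite <- (Rpower_O x) by lra. apply Rpower_lt; lra. Qed.

Lemma Rpower_sub_1 x e : 0 < x -> Rpower x (e - 1) = Rpower x e / x.
Proof.
  intros Hx. unfold Rminus. rewrite Rpower_plus, Rpower_Ropp, Rpower_1 by lra.
  reflexivity.
Qed.

Lemma Rpower_Rpower_inv x e : e <> 0 -> 0 < x -> Rpower (Rpower x e) (1 / e) = x.
Proof.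
  intros He Hx. rewrite Rpower_mult. replace (e * (1 / e)) with 1 by (field; lra).
  now apply Rpower_1.
Qed.

Lemma Rpower_inv_Rpower x e : e <> 0 -> 0 < x -> Rpower (Rpower x (1 / e)) e = x.
Proof.
  intros He Hx. rewrite Rpower_mult. replace (1 / e * e) with 1 by (field; lra).
  now apply Rpower_1.
Qed.

Lemma is_derive_Rpower e x : 0 < x ->
  is_derive (fun y => Rpower y e) x (e * Rpower x (e - 1)).
Proof. intros Hx. apply is_derive_Reals, derivable_pt_lim_power, Hx. Qed.

Lemma continuity_pt_Rpower e x : 0 < x -> continuity_pt (fun y => Rpower y e) x.
Proof.
  intros Hx. apply derivable_continuous_pt, ex_derive_Reals_0.
  eexists. now apply is_derive_Rpower.
Qed.

Lemma locally_2d_pos f x y : continuity_2d_pt f x y -> 0 < f x y ->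
  locally_2d (fun u v => 0 < f u v) x y.
Proof.
  intros Hc Hp. destruct (Hc (mkposreal _ Hp)) as [d Hd].
  exists d. intros u v Hu Hv. specialize (Hd u v Hu Hv). simpl in Hd.
  apply Rabs_def2 in Hd. lra.
Qed.

Lemma continuous_of_continuity_2d_pt f x y :
  continuity_2d_pt f x y -> continuous (fun v => f x v) y.
Proof.
  intros Hc. apply continuity_pt_filterlim. intros eps Heps.
  destruct (Hc (mkposreal _ Heps)) as [d Hd]. exists d. split; [apply cond_pos |].
  intros v [_ Hv]. apply (Hd x v); [| exact Hv].
  rewrite Rminus_eq_0, Rabs_R0. apply cond_pos.
Qed.

(* Unknown unary functions are left as [continuity_pt] side goals. *)
Ltac continuity_2d :=
  repeat (cbv beta; match goal with
  | |- continuity_2d_pt (fun u v => u) _ _ => apply continuity_2d_pt_id1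
  | |- continuity_2d_pt (fun u v => v) _ _ => apply continuity_2d_pt_id2
  | |- continuity_2d_pt (fun u v => ?c) _ _ => apply continuity_2d_pt_const
  | |- continuity_2d_pt (fun u v => @?f u v + @?g u v) _ _ => apply (continuity_2d_pt_plus f g)
  | |- continuity_2d_pt (fun u v => @?f u v - @?g u v) _ _ => apply (continuity_2d_pt_minus f g)
  | |- continuity_2d_pt (fun u v => @?f u v * @?g u v) _ _ => apply (continuity_2d_pt_mult f g)
  | |- continuity_2d_pt (fun u v => @?f u v / @?g u v) _ _ =>
      apply (continuity_2d_pt_ext (fun u v => f u v * / g u v)); [reflexivity |]
  | |- continuity_2d_pt (fun u v => - @?f u v) _ _ => apply (continuity_2d_pt_opp f)
  | |- continuity_2d_pt (fun u v => / @?f u v) _ _ => apply (continuity_2d_pt_inv f)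
  | |- continuity_2d_pt (fun u v => (@?f u v) ^ ?n) _ _ =>
      apply (continuity_1d_2d_pt_comp (fun y => y ^ n) f);
      [apply derivable_continuous_pt, derivable_pow |]
  | |- continuity_2d_pt (fun u v => sin (@?f u v)) _ _ =>
      apply (continuity_1d_2d_pt_comp sin f); [apply continuity_sin |]
  | |- continuity_2d_pt (fun u v => cos (@?f u v)) _ _ =>
      apply (continuity_1d_2d_pt_comp cos f); [apply continuity_cos |]
  | |- continuity_2d_pt (fun u v => sqrt (@?f u v)) _ _ =>
      apply (continuity_1d_2d_pt_comp sqrt f); [apply continuity_pt_sqrt |]
  | |- continuity_2d_pt (fun u v => Rpower (@?f u v) ?e) _ _ =>
      apply (continuity_1d_2d_pt_comp (fun y => Rpower y e) f); [apply continuity_pt_Rpower |]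
  | |- continuity_2d_pt (fun u v => ?F (@?f u v)) _ _ => apply (continuity_1d_2d_pt_comp F f)
  end).

Lemma is_derive_RInt_param_pos (f df D : R -> R -> R) (a b x : R) :
  a <= b ->
  (forall u v, 0 < D u v -> is_derive (fun z => f z v) u (df u v)) ->
  locally x (fun u => forall t, a <= t <= b -> 0 < D u t) ->
  (forall t, a <= t <= b -> continuity_2d_pt D x t) ->
  (forall t, a <= t <= b -> continuity_2d_pt df x t) ->
  locally x (fun u => ex_RInt (f u) a b) ->
  is_derive (fun u => RInt (f u) a b) x (RInt (df x) a b).
Proof.
  intros Hab Hder HD HDc Hdfc Hint.
  assert (HDx := locally_singleton _ _ HD).
  replace (RInt (df x) a b) with (RInt (fun t => Derive (fun u => f u t) x) a b).
  2: { apply RInt_ext. rewrite Rmin_left, Rmax_right by exact Hab. intros t Ht.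
       apply is_derive_unique, Hder, HDx; lra. }
  apply (is_derive_RInt_param f).
  - refine (filter_imp _ _ _ HD). intros u Hu t Ht.
    rewrite Rmin_left, Rmax_right in Ht by exact Hab. eexists. now apply Hder, Hu.
  - intros t Ht. rewrite Rmin_left, Rmax_right in Ht by exact Hab.
    apply (continuity_2d_pt_ext_loc df); [| now apply Hdfc].
    destruct (locally_2d_pos D x t (HDc t Ht) (HDx t Ht)) as [d Hd].
    exists d. intros u v Hu Hv. symmetry. apply is_derive_unique, Hder, Hd; assumption.
  - exact Hint.
Qed.

(** * The difference quotient [Phi] of the power function *)

Definition moment (k : nat) (e w : R) : R :=
  RInt (fun t => t ^ k * Rpower (1 + t * w) e) 0 1.

Lemma one_plus_mul_pos t w : 0 <= t <= 1 -> -1 < w -> 0 < 1 + t * w.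
Proof.
  intros Ht Hw. assert (0 <= t * (1 + w)) by (apply Rmult_le_pos; lra).
  destruct (Req_dec t 1); [subst; lra | nra].
Qed.

Lemma is_derive_moment_integrand k e u t : 0 < 1 + t * u ->
  is_derive (fun z => t ^ k * Rpower (1 + t * z) e) u
    (e * (t ^ S k * Rpower (1 + t * u) (e - 1))).
Proof.
  intros H. rewrite Rpower_sub_1 by lra. unfold Rpower. auto_derive; [lra |].
  simpl. field. lra.
Qed.

Lemma continuous_moment_integrand k e w t : 0 < 1 + t * w ->
  continuous (fun t => t ^ k * Rpower (1 + t * w) e) t.
Proof.
  intros H. apply (ex_derive_continuous (K := R_AbsRing) (V := R_NormedModule)).
  unfold Rpower. auto_derive. lra.
Qed.

Lemma ex_RInt_moment k e w : -1 < w ->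
  ex_RInt (fun t => t ^ k * Rpower (1 + t * w) e) 0 1.
Proof.
  intros Hw. apply (ex_RInt_continuous (V := R_CompleteNormedModule)). intros t Ht.
  rewrite Rmin_left, Rmax_right in Ht by lra.
  apply continuous_moment_integrand, one_plus_mul_pos; lra.
Qed.

Lemma moment_pos k e w : -1 < w -> 0 < moment k e w.
Proof.
  intros Hw. apply RInt_gt_0; [lra | |].
  - intros t Ht. apply Rmult_lt_0_compat; [apply pow_lt; lra | apply Rpower_pos].
  - intros t Ht. apply continuous_moment_integrand, one_plus_mul_pos; lra.
Qed.

Lemma is_derive_moment k e w : -1 < w ->
  is_derive (moment k e) w (e * moment (S k) (e - 1) w).
Proof.
  intros Hw. unfold moment.
  rewrite <- (RInt_scal (V := R_CompleteNormedModule)) by now apply ex_RInt_moment.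
  apply (is_derive_RInt_param_pos (fun u t => t ^ k * Rpower (1 + t * u) e)
           (fun u t => e * (t ^ S k * Rpower (1 + t * u) (e - 1))) (fun u t => 1 + t * u));
    [lra | intros; now apply is_derive_moment_integrand | | | |].
  - apply (locally_open (fun u => -1 < u)); [apply open_gt | | exact Hw].
    intros u Hu t Ht. now apply one_plus_mul_pos.
  - intros t Ht. continuity_2d.
  - intros t Ht. continuity_2d. now apply one_plus_mul_pos.
  - apply (locally_open (fun u => -1 < u)); [apply open_gt | | exact Hw].
    intros u Hu. now apply ex_RInt_moment.
Qed.

(* [Phi c w = ((1 + w)^c - 1) / w], in a form that stays smooth through [w = 0], which
   is reached at the endpoints phi = 0, pi/2 of the substituted integral. *)
Definition Phi (c w : R) : R := c * moment 0 (c - 1) w.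

Definition dPhi (c w : R) : R := c * (c - 1) * moment 1 (c - 2) w.

Lemma is_derive_Phi c w : -1 < w -> is_derive (Phi c) w (dPhi c w).
Proof.
  intros Hw. unfold Phi, dPhi.
  replace (c - 2) with (c - 1 - 1) by ring. rewrite Rmult_assoc.
  apply (is_derive_scal (moment 0 (c - 1))), is_derive_moment, Hw.
Qed.

Lemma continuity_pt_Phi c w : -1 < w -> continuity_pt (Phi c) w.
Proof.
  intros Hw. apply derivable_continuous_pt, ex_derive_Reals_0.
  eexists. now apply is_derive_Phi.
Qed.

Lemma continuity_pt_dPhi c w : -1 < w -> continuity_pt (dPhi c) w.
Proof.
  intros Hw. apply derivable_continuous_pt, ex_derive_Reals_0. unfold dPhi.
  eexists. apply (is_derive_scal (moment 1 (c - 2))), is_derive_moment, Hw.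
Qed.

Lemma Phi_pos c w : 0 < c -> -1 < w -> 0 < Phi c w.
Proof. intros Hc Hw. apply Rmult_lt_0_compat; [exact Hc | now apply moment_pos]. Qed.

Lemma dPhi_two_div_sign q w : 0 < q -> -1 < w ->
  (q < 2 -> 0 < dPhi (2 / q) w) /\ (2 < q -> dPhi (2 / q) w < 0).
Proof.
  intros Hq Hw. unfold dPhi.
  assert (Hm := moment_pos 1 (2 / q - 2) w Hw).
  assert (Hc : 0 < 2 / q) by (apply Rdiv_lt_0_compat; lra).
  assert (Hcq : 2 / q * q = 2) by (field; lra).
  split; intros Hq2.
  - assert (1 < 2 / q) by nra.
    repeat apply Rmult_lt_0_compat; lra.
  - assert (2 / q < 1) by nra.
    assert (0 < 2 / q * (1 - 2 / q) * moment 1 (2 / q - 2) w)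
      by (repeat apply Rmult_lt_0_compat; lra).
    nra.
Qed.

Lemma Rpower_1_plus_sub_1 c w : -1 < w -> Rpower (1 + w) c - 1 = w * Phi c w.
Proof.
  intros Hw.
  assert (Hd : forall t, 0 <= t <= 1 ->
    is_derive (fun t => Rpower (1 + t * w) c) t (w * (c * Rpower (1 + t * w) (c - 1)))).
  { intros t Ht. apply (is_derive_comp (fun y => Rpower y c) (fun t => 1 + t * w)).
    - apply is_derive_Rpower, one_plus_mul_pos; lra.
    - auto_derive; [auto | ring]. }
  assert (Hc : forall t, 0 <= t <= 1 ->
    continuous (fun t => w * (c * Rpower (1 + t * w) (c - 1))) t).
  { intros t Ht. apply (ex_derive_continuous (K := R_AbsRing) (V := R_NormedModule)).
    assert (0 < 1 + t * w) by (apply one_plus_mul_pos; lra).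
    unfold Rpower. auto_derive. lra. }
  assert (HI := is_RInt_derive (V := R_CompleteNormedModule)
    (fun t => Rpower (1 + t * w) c) (fun t => w * (c * Rpower (1 + t * w) (c - 1))) 0 1).
  rewrite Rmin_left, Rmax_right in HI by lra.
  specialize (HI Hd Hc). apply is_RInt_unique in HI.
  change (minus ?a ?b) with (a - b) in HI.
  rewrite Rmult_0_l, Rplus_0_r, Rmult_1_l, Rpower_1_l in HI.
  rewrite <- HI. unfold Phi, moment. rewrite <- Rmult_assoc.
  rewrite <- (RInt_scal (V := R_CompleteNormedModule)) by now apply ex_RInt_moment.
  apply RInt_ext. intros t _. change (scal ?a ?b) with (a * b). simpl. ring.
Qed.

(** * Monotonicity of [Jtilde_mq] in [t] *)

Definition K_minus_1 (t z : R) : R := (1 - z ^ 2) / (z + t) ^ 2.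

Lemma K_minus_1_nonneg t z : -1 < z < 1 -> 0 <= K_minus_1 t z.
Proof.
  intros Hz. unfold K_minus_1. destruct (Req_dec (z + t) 0) as [E | E].
  - rewrite E. unfold Rdiv. rewrite pow_i, Rinv_0 by auto. lra.
  - apply Rmult_le_pos; [nra | apply Rlt_le, Rinv_0_lt_compat; nra].
Qed.

Lemma Jtilde_mq_eq_Phi q t z : 0 < z + t -> -1 < z < 1 ->
  Jtilde_mq q t z = (1 - z ^ 2) * Phi (2 / q) (K_minus_1 t z).
Proof.
  intros Ht Hz. unfold Jtilde_mq.
  replace (Kfun t z) with (1 + K_minus_1 t z) by (unfold Kfun, K_minus_1; field; lra).
  assert (H0 := K_minus_1_nonneg t z Hz).
  rewrite Rpower_1_plus_sub_1 by lra. unfold K_minus_1. field. lra.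
Qed.

Definition Jtilde_mq_dt (q t z : R) : R :=
  - (2 * (1 - z ^ 2) ^ 2 / (z + t) ^ 3) * dPhi (2 / q) (K_minus_1 t z).

Lemma is_derive_Jtilde_mq q t z : 1 < t -> -1 < z < 1 ->
  is_derive (fun s => Jtilde_mq q s z) t (Jtilde_mq_dt q t z).
Proof.
  intros Ht Hz.
  apply (is_derive_ext_loc (fun s => (1 - z ^ 2) * Phi (2 / q) (K_minus_1 s z))).
  { apply (locally_open (fun s => - z < s)); [apply open_gt | | lra].
    intros s Hs. symmetry. apply Jtilde_mq_eq_Phi; lra. }
  assert (HK := K_minus_1_nonneg t z Hz).
  assert (HdK : is_derive (fun s => K_minus_1 s z) t (- 2 * (1 - z ^ 2) / (z + t) ^ 3)).
  { unfold K_minus_1. auto_derive; [nra | field; lra]. }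
  replace (Jtilde_mq_dt q t z)
    with ((1 - z ^ 2) * (- 2 * (1 - z ^ 2) / (z + t) ^ 3 * dPhi (2 / q) (K_minus_1 t z))).
  - apply (is_derive_scal (fun s => Phi (2 / q) (K_minus_1 s z))).
    apply (is_derive_comp (Phi (2 / q)) (fun s => K_minus_1 s z));
      [apply is_derive_Phi; lra | exact HdK].
  - unfold Jtilde_mq_dt. field. lra.
Qed.

Lemma Jtilde_mq_dt_sign q t z : 0 < q -> 1 < t -> -1 < z < 1 ->
  (q < 2 -> Jtilde_mq_dt q t z < 0) /\ (2 < q -> 0 < Jtilde_mq_dt q t z).
Proof.
  intros Hq Ht Hz. unfold Jtilde_mq_dt.
  assert (Hk : 0 < 2 * (1 - z ^ 2) ^ 2 / (z + t) ^ 3).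
  { apply Rdiv_lt_0_compat; [| apply pow_lt; lra].
    apply Rmult_lt_0_compat; [lra | apply pow_lt; nra]. }
  assert (HK := K_minus_1_nonneg t z Hz).
  destruct (dPhi_two_div_sign q (K_minus_1 t z) Hq ltac:(lra)) as [Hlt Hgt].
  split; intros Hq2; [specialize (Hlt Hq2) | specialize (Hgt Hq2)]; nra.
Qed.

(** * The substituted integral [Theta_sub] *)

Definition Psin (s phi : R) : R := 1 + (s - 1) * sin phi ^ 2.
Definition Bsin (s phi : R) : R := (s - 1) * sin phi * cos phi / Psin s phi.
Definition Wsin (s phi : R) : R := Bsin s phi ^ 2.
Definition dWsin (s phi : R) : R := 2 * Bsin s phi * (sin phi * cos phi / Psin s phi ^ 2).

Definition theta_sub (q s phi : R) : R := 2 / q * / sqrt (Phi (2 / q) (Wsin s phi)).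
Definition dtheta_sub (q s phi : R) : R :=
  - (2 / q * dWsin s phi / (2 * Phi (2 / q) (Wsin s phi) * sqrt (Phi (2 / q) (Wsin s phi))))
  * dPhi (2 / q) (Wsin s phi).
Definition Theta_sub (q s : R) : R := RInt (theta_sub q s) 0 (PI / 2).

Lemma Psin_pos s phi : 0 < s -> 0 < Psin s phi.
Proof.
  intros Hs. unfold Psin. assert (H := sin2 phi). unfold Rsqr in H.
  assert (0 <= cos phi ^ 2) by apply pow2_ge_0.
  assert (0 <= sin phi ^ 2) by apply pow2_ge_0.
  destruct (Rle_dec 1 s); nra.
Qed.

Lemma Bsin_pos s phi : 1 < s -> 0 < phi < PI / 2 -> 0 < Bsin s phi.
Proof.
  intros Hs Hphi. assert (0 < sin phi) by (apply sin_gt_0; lra).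
  assert (0 < cos phi) by (apply cos_gt_0; lra).
  assert (HP := Psin_pos s phi ltac:(lra)). unfold Bsin.
  apply Rdiv_lt_0_compat; [| exact HP]. repeat apply Rmult_lt_0_compat; lra.
Qed.

Lemma Wsin_gt_m1 s phi : -1 < Wsin s phi.
Proof. assert (0 <= Wsin s phi) by apply pow2_ge_0. lra. Qed.

Lemma dWsin_pos s phi : 1 < s -> 0 < phi < PI / 2 -> 0 < dWsin s phi.
Proof.
  intros Hs Hphi. assert (0 < sin phi) by (apply sin_gt_0; lra).
  assert (0 < cos phi) by (apply cos_gt_0; lra).
  assert (HP := Psin_pos s phi ltac:(lra)). assert (HB := Bsin_pos s phi Hs Hphi).
  unfold dWsin. apply Rmult_lt_0_compat; [lra |].
  apply Rdiv_lt_0_compat; [nra | apply pow_lt, HP].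
Qed.

Lemma is_derive_Wsin s phi : 0 < s -> is_derive (fun u => Wsin u phi) s (dWsin s phi).
Proof.
  intros Hs. assert (HP := Psin_pos s phi Hs). unfold dWsin, Wsin, Bsin, Psin in *.
  auto_derive; [lra | field; lra].
Qed.

Lemma is_derive_inv_sqrt y : 0 < y -> is_derive (fun y => / sqrt y) y (- / (2 * y * sqrt y)).
Proof.
  intros Hy. assert (0 < sqrt y) by (apply sqrt_lt_R0; lra).
  auto_derive; [lra |]. field_simplify; [| lra | lra].
  replace (sqrt y ^ 3) with (sqrt y * sqrt y * sqrt y) by ring.
  rewrite sqrt_sqrt by lra. field. lra.
Qed.

Lemma Phi_Wsin_pos q s phi : 0 < q -> 0 < Phi (2 / q) (Wsin s phi).
Proof. intros Hq. apply Phi_pos; [apply Rdiv_lt_0_compat; lra | apply Wsin_gt_m1]. Qed.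

Lemma is_derive_theta_sub q s phi : 0 < q -> 0 < s ->
  is_derive (fun u => theta_sub q u phi) s (dtheta_sub q s phi).
Proof.
  intros Hq Hs. assert (HP := Phi_Wsin_pos q s phi Hq).
  assert (0 < sqrt (Phi (2 / q) (Wsin s phi))) by (apply sqrt_lt_R0, HP).
  replace (dtheta_sub q s phi) with (2 / q * ((dWsin s phi * dPhi (2 / q) (Wsin s phi))
    * - / (2 * Phi (2 / q) (Wsin s phi) * sqrt (Phi (2 / q) (Wsin s phi)))))
    by (unfold dtheta_sub; field; lra).
  apply (is_derive_scal (fun u => / sqrt (Phi (2 / q) (Wsin u phi)))).
  apply (is_derive_comp (fun y => / sqrt y) (fun u => Phi (2 / q) (Wsin u phi))).
  - apply is_derive_inv_sqrt, HP.
  - apply (is_derive_comp (Phi (2 / q)) (fun u => Wsin u phi)).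
    + apply is_derive_Phi, Wsin_gt_m1.
    + now apply is_derive_Wsin.
Qed.

Lemma continuity_2d_pt_Wsin s phi : 0 < s -> continuity_2d_pt Wsin s phi.
Proof.
  intros Hs. assert (HP := Psin_pos s phi Hs).
  unfold Wsin, Bsin, Psin. continuity_2d. apply Rgt_not_eq, HP.
Qed.

Lemma continuity_2d_pt_dWsin s phi : 0 < s -> continuity_2d_pt dWsin s phi.
Proof.
  intros Hs. assert (HP := Psin_pos s phi Hs).
  unfold dWsin, Bsin, Psin. continuity_2d; apply pow_nonzero || idtac; apply Rgt_not_eq, HP.
Qed.

Lemma continuity_2d_pt_theta_sub q s phi : 0 < q -> 0 < s ->
  continuity_2d_pt (theta_sub q) s phi.
Proof.
  intros Hq Hs. assert (HP := Phi_Wsin_pos q s phi Hq).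
  assert (Hsq : 0 < sqrt (Phi (2 / q) (Wsin s phi))) by (apply sqrt_lt_R0, HP).
  unfold theta_sub. continuity_2d.
  all: first [lra | apply continuity_pt_Phi, Wsin_gt_m1 | now apply continuity_2d_pt_Wsin].
Qed.

Lemma continuity_2d_pt_dtheta_sub q s phi : 0 < q -> 0 < s ->
  continuity_2d_pt (dtheta_sub q) s phi.
Proof.
  intros Hq Hs. assert (HP := Phi_Wsin_pos q s phi Hq).
  assert (Hsq : 0 < sqrt (Phi (2 / q) (Wsin s phi))) by (apply sqrt_lt_R0, HP).
  unfold dtheta_sub. continuity_2d.
  all: first [lra | apply continuity_pt_Phi, Wsin_gt_m1 | apply continuity_pt_dPhi, Wsin_gt_m1
             | now apply continuity_2d_pt_Wsin | now apply continuity_2d_pt_dWsin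
             | apply Rgt_not_eq, Rmult_lt_0_compat; lra].
Qed.

Lemma continuous_theta_sub q s phi : 0 < q -> 0 < s -> continuous (theta_sub q s) phi.
Proof.
  intros Hq Hs. apply (continuous_of_continuity_2d_pt (theta_sub q)).
  now apply continuity_2d_pt_theta_sub.
Qed.

Lemma continuous_dtheta_sub q s phi : 0 < q -> 0 < s -> continuous (dtheta_sub q s) phi.
Proof.
  intros Hq Hs. apply (continuous_of_continuity_2d_pt (dtheta_sub q)).
  now apply continuity_2d_pt_dtheta_sub.
Qed.

Lemma ex_RInt_theta_sub q s a b : 0 < q -> 0 < s -> ex_RInt (theta_sub q s) a b.
Proof.
  intros Hq Hs. apply (ex_RInt_continuous (V := R_CompleteNormedModule)).
  intros; now apply continuous_theta_sub.
Qed.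

Lemma is_derive_Theta_sub q s : 0 < q -> 0 < s ->
  is_derive (Theta_sub q) s (RInt (dtheta_sub q s) 0 (PI / 2)).
Proof.
  intros Hq Hs. assert (HPI := PI2_RGT_0).
  apply (is_derive_RInt_param_pos (theta_sub q) (dtheta_sub q) (fun u _ => u));
    [lra | intros; now apply is_derive_theta_sub | | | |].
  - apply (locally_open (fun u => 0 < u)); [apply open_gt | | exact Hs]. auto.
  - intros; apply continuity_2d_pt_id1.
  - intros; now apply continuity_2d_pt_dtheta_sub.
  - apply (locally_open (fun u => 0 < u)); [apply open_gt | | exact Hs].
    intros; now apply ex_RInt_theta_sub.
Qed.

Lemma dtheta_sub_sign q s phi : 0 < q -> 1 < s -> 0 < phi < PI / 2 ->
  (q < 2 -> dtheta_sub q s phi < 0) /\ (2 < q -> 0 < dtheta_sub q s phi).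
Proof.
  intros Hq Hs Hphi. assert (HP := Phi_Wsin_pos q s phi Hq).
  assert (0 < sqrt (Phi (2 / q) (Wsin s phi))) by (apply sqrt_lt_R0, HP).
  assert (HdW := dWsin_pos s phi Hs Hphi).
  unfold dtheta_sub.
  assert (Hk : 0 < 2 / q * dWsin s phi
                   / (2 * Phi (2 / q) (Wsin s phi) * sqrt (Phi (2 / q) (Wsin s phi)))).
  { apply Rdiv_lt_0_compat; [apply Rmult_lt_0_compat; [apply Rdiv_lt_0_compat |] |
      apply Rmult_lt_0_compat; [apply Rmult_lt_0_compat |]]; lra. }
  destruct (dPhi_two_div_sign q (Wsin s phi) Hq (Wsin_gt_m1 s phi)) as [Hlt Hgt].
  split; intros Hq2; [specialize (Hlt Hq2) | specialize (Hgt Hq2)]; nra.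
Qed.

Lemma RInt_dtheta_sub_sign q s : 0 < q -> 1 < s ->
  (q < 2 -> RInt (dtheta_sub q s) 0 (PI / 2) < 0) /\
  (2 < q -> 0 < RInt (dtheta_sub q s) 0 (PI / 2)).
Proof.
  intros Hq Hs. assert (HPI := PI2_RGT_0).
  assert (Hc : forall phi, continuous (dtheta_sub q s) phi)
    by (intros; apply continuous_dtheta_sub; lra).
  assert (H0 : RInt (fun _ => 0) 0 (PI / 2) = 0).
  { rewrite (RInt_const (V := R_CompleteNormedModule)).
    apply (scal_zero_r (K := R_AbsRing) (V := R_NormedModule)). }
  split; intros Hq2.
  - enough (RInt (dtheta_sub q s) 0 (PI / 2) < RInt (fun _ => 0) 0 (PI / 2)) by lra.
    apply RInt_lt; auto using continuous_const. intros; now apply dtheta_sub_sign.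
  - enough (RInt (fun _ => 0) 0 (PI / 2) < RInt (dtheta_sub q s) 0 (PI / 2)) by lra.
    apply RInt_lt; auto using continuous_const. intros; now apply dtheta_sub_sign.
Qed.

(** * Change of variables in [Theta] *)

Lemma filterlim_inverse_at_right (h g : R -> R) (u0 u1 : R) : u0 < u1 ->
  (forall x y, u0 <= x -> x < y -> y <= u1 -> h x < h y) ->
  (forall a, h u0 < a < h u1 -> u0 < g a < u1 /\ h (g a) = a) ->
  filterlim g (at_right (h u0)) (locally u0).
Proof.
  intros Hu Hinc Hg P [eps HP].
  set (e := Rmin (eps / 2) (u1 - u0)).
  assert (He : 0 < e <= u1 - u0 /\ e < eps).
  { assert (0 < eps) by apply cond_pos. unfold e. repeat split.
    - apply Rmin_pos; lra.
    - apply Rmin_r.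
    - apply Rle_lt_trans with (eps / 2); [apply Rmin_l | lra]. }
  assert (Hhe : h u0 < h (u0 + e)) by (apply Hinc; lra).
  assert (Hhe1 : h (u0 + e) <= h u1).
  { destruct (Req_dec e (u1 - u0)) as [E | E].
    - right. f_equal. lra.
    - left. apply Hinc; lra. }
  exists (mkposreal (h (u0 + e) - h u0) ltac:(lra)). intros a Ha Ha0.
  change (Rabs (a - h u0) < h (u0 + e) - h u0) in Ha. apply Rabs_def2 in Ha.
  destruct (Hg a ltac:(lra)) as [Hga Hhga].
  apply HP. change (Rabs (g a - u0) < eps). apply Rabs_def1; [| lra].
  destruct (Rlt_or_le (g a) (u0 + e)) as [Hlt | Hle]; [lra |].
  destruct (Req_dec (g a) (u0 + e)) as [E | E].
  - rewrite <- E in Ha. lra.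
  - assert (h (u0 + e) < h (g a)) by (apply Hinc; lra). lra.
Qed.

Lemma filterlim_inverse_at_left (h g : R -> R) (u0 u1 : R) : u0 < u1 ->
  (forall x y, u0 <= x -> x < y -> y <= u1 -> h x < h y) ->
  (forall a, h u0 < a < h u1 -> u0 < g a < u1 /\ h (g a) = a) ->
  filterlim g (at_left (h u1)) (locally u1).
Proof.
  intros Hu Hinc Hg P [eps HP].
  set (e := Rmin (eps / 2) (u1 - u0)).
  assert (He : 0 < e <= u1 - u0 /\ e < eps).
  { assert (0 < eps) by apply cond_pos. unfold e. repeat split.
    - apply Rmin_pos; lra.
    - apply Rmin_r.
    - apply Rle_lt_trans with (eps / 2); [apply Rmin_l | lra]. }
  assert (Hhe : h (u1 - e) < h u1) by (apply Hinc; lra).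
  assert (Hhe0 : h u0 <= h (u1 - e)).
  { destruct (Req_dec e (u1 - u0)) as [E | E].
    - right. f_equal. lra.
    - left. apply Hinc; lra. }
  exists (mkposreal (h u1 - h (u1 - e)) ltac:(lra)). intros a Ha Ha1.
  change (Rabs (a - h u1) < h u1 - h (u1 - e)) in Ha. apply Rabs_def2 in Ha.
  destruct (Hg a ltac:(lra)) as [Hga Hhga].
  apply HP. change (Rabs (g a - u1) < eps). apply Rabs_def1; [lra |].
  destruct (Rlt_or_le (u1 - e) (g a)) as [Hlt | Hle]; [lra |].
  destruct (Req_dec (g a) (u1 - e)) as [E | E].
  - rewrite E in Hhga. lra.
  - assert (h (g a) < h (u1 - e)) by (apply Hinc; lra). lra.
Qed.

Definition Theta_mq_integrand (q s x : R) : R :=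
  / sqrt (Rpower (s + 1 - s * Rpower x (- q)) (2 / q) - x ^ 2).

Lemma Theta_integrand_mq q r x : 0 < q -> 1 < r ->
  Theta_integrand (- q) q r x = Theta_mq_integrand q (Rpower r q) x.
Proof.
  intros Hq Hr. assert (Hs := Rpower_gt_1 r q Hr Hq).
  unfold Theta_integrand, Theta_mq_integrand. rewrite Rpower_Ropp.
  assert (/ Rpower r q < 1) by (rewrite <- Rinv_1; apply Rinv_lt_contravar; lra).
  do 4 f_equal. field. lra.
Qed.

Definition xsub (q s phi : R) : R := Rpower (Psin s phi) (1 / q).
Definition dxsub (q s phi : R) : R :=
  1 / q * Rpower (Psin s phi) (1 / q - 1) * ((s - 1) * (2 * sin phi * cos phi)).

Definition phinv (q s a : R) : R := asin (sqrt ((Rpower a q - 1) / (s - 1))).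

Section Substitution.
Variables q s : R.
Hypotheses (Hq : 0 < q) (Hs : 1 < s).

Lemma is_derive_xsub phi : is_derive (xsub q s) phi (dxsub q s phi).
Proof.
  assert (HP := Psin_pos s phi ltac:(lra)). unfold xsub.
  replace (dxsub q s phi) with ((s - 1) * (2 * sin phi * cos phi)
    * (1 / q * Rpower (Psin s phi) (1 / q - 1))) by (unfold dxsub; ring).
  apply (is_derive_comp (fun y => Rpower y (1 / q)) (Psin s)).
  - now apply is_derive_Rpower.
  - unfold Psin. auto_derive; [auto | ring].
Qed.

Lemma continuous_dxsub phi : continuous (dxsub q s) phi.
Proof.
  assert (HP := Psin_pos s phi ltac:(lra)).
  apply (ex_derive_continuous (K := R_AbsRing) (V := R_NormedModule)).
  unfold dxsub, Psin in *. unfold Rpower. auto_derive. exact HP.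
Qed.

Lemma Psin_mul_one_plus_Wsin phi :
  Psin s phi * (1 + Wsin s phi) = s + 1 - s * / Psin s phi.
Proof.
  assert (HP := Psin_pos s phi ltac:(lra)).
  assert (Hc2 : cos phi ^ 2 = 1 - sin phi ^ 2)
    by (assert (H := sin2_cos2 phi); unfold Rsqr in H; simpl; lra).
  unfold Wsin, Bsin.
  replace (((s - 1) * sin phi * cos phi / Psin s phi) ^ 2)
    with ((s - 1) ^ 2 * sin phi ^ 2 * cos phi ^ 2 / Psin s phi ^ 2) by (field; lra).
  rewrite Hc2. unfold Psin in *. field. lra.
Qed.

Lemma Rpower_xsub_opp phi : Rpower (xsub q s phi) (- q) = / Psin s phi.
Proof.
  assert (HP := Psin_pos s phi ltac:(lra)).
  unfold xsub. rewrite Rpower_mult. replace (1 / q * - q) with (Ropp 1) by (field; lra).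
  now rewrite Rpower_Ropp, Rpower_1.
Qed.

Lemma xsub_sqr phi : xsub q s phi ^ 2 = Rpower (Psin s phi) (2 / q).
Proof.
  unfold xsub. simpl. rewrite Rmult_1_r, <- Rpower_plus. f_equal. field. lra.
Qed.

Lemma Theta_mq_radicand_xsub phi :
  Rpower (s + 1 - s * Rpower (xsub q s phi) (- q)) (2 / q) - xsub q s phi ^ 2
  = (xsub q s phi * Bsin s phi) ^ 2 * Phi (2 / q) (Wsin s phi).
Proof.
  assert (HP := Psin_pos s phi ltac:(lra)). assert (HW := Wsin_gt_m1 s phi).
  rewrite Rpower_xsub_opp, <- Psin_mul_one_plus_Wsin.
  rewrite <- Rpower_mult_distr by lra.
  rewrite Rpow_mult_distr, xsub_sqr.
  rewrite Rmult_assoc. change (Bsin s phi ^ 2) with (Wsin s phi).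
  rewrite <- Rpower_1_plus_sub_1 by exact HW. ring.
Qed.

Lemma Theta_mq_integrand_xsub phi : 0 < phi < PI / 2 ->
  Theta_mq_integrand q s (xsub q s phi)
  = / (xsub q s phi * Bsin s phi * sqrt (Phi (2 / q) (Wsin s phi))).
Proof.
  intros Hphi. assert (HB := Bsin_pos s phi Hs Hphi).
  assert (Hx : 0 < xsub q s phi) by apply Rpower_pos.
  unfold Theta_mq_integrand. rewrite Theta_mq_radicand_xsub.
  rewrite sqrt_mult_alt by apply pow2_ge_0.
  rewrite sqrt_pow2 by nra. reflexivity.
Qed.

Lemma dxsub_mul_Theta_mq_integrand phi : 0 < phi < PI / 2 ->
  dxsub q s phi * Theta_mq_integrand q s (xsub q s phi) = theta_sub q s phi.
Proof.
  intros Hphi. assert (HB := Bsin_pos s phi Hs Hphi).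
  assert (HPhi := Phi_Wsin_pos q s phi Hq).
  assert (0 < sqrt (Phi (2 / q) (Wsin s phi))) by (apply sqrt_lt_R0, HPhi).
  assert (HP := Psin_pos s phi ltac:(lra)).
  assert (0 < xsub q s phi) by apply Rpower_pos.
  assert (0 < sin phi) by (apply sin_gt_0; lra).
  assert (0 < cos phi) by (apply cos_gt_0; lra).
  rewrite Theta_mq_integrand_xsub by exact Hphi.
  unfold dxsub, theta_sub. rewrite Rpower_sub_1 by exact HP. fold (xsub q s phi).
  unfold Bsin. field. repeat split; lra.
Qed.

Lemma continuous_Theta_mq_integrand_xsub phi : 0 < phi < PI / 2 ->
  continuous (Theta_mq_integrand q s) (xsub q s phi).
Proof.
  intros Hphi.
  assert (Hin : 0 < s + 1 - s * Rpower (xsub q s phi) (- q)).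
  { rewrite Rpower_xsub_opp, <- Psin_mul_one_plus_Wsin.
    apply Rmult_lt_0_compat; [apply Psin_pos; lra | generalize (Wsin_gt_m1 s phi); lra]. }
  assert (Hrad := Theta_mq_radicand_xsub phi).
  assert (Hrad_pos : 0 < (xsub q s phi * Bsin s phi) ^ 2 * Phi (2 / q) (Wsin s phi)).
  { apply Rmult_lt_0_compat; [| now apply Phi_Wsin_pos].
    apply pow_lt, Rmult_lt_0_compat; [apply Rpower_pos | now apply Bsin_pos]. }
  rewrite <- Hrad in Hrad_pos. clear Hrad.
  assert (Hx : 0 < xsub q s phi) by apply Rpower_pos.
  generalize dependent (xsub q s phi). intros x Hin Hrad_pos Hx.
  apply (ex_derive_continuous (K := R_AbsRing) (V := R_NormedModule)).
  unfold Theta_mq_integrand, Rpower, Rminus in *. auto_derive.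
  replace (x * (x * 1)) with (x ^ 2) by ring.
  repeat split; [lra | lra | lra | apply Rgt_not_eq, sqrt_lt_R0; lra].
Qed.

Lemma xsub_increasing phi1 phi2 :
  0 <= phi1 -> phi1 < phi2 -> phi2 <= PI / 2 -> xsub q s phi1 < xsub q s phi2.
Proof.
  intros H1 H12 H2. assert (HPI := PI2_RGT_0).
  assert (Hsin : sin phi1 < sin phi2) by (apply sin_increasing_1; lra).
  assert (0 <= sin phi1) by (apply sin_ge_0; lra).
  unfold xsub. apply Rlt_Rpower_l; [apply Rdiv_lt_0_compat; lra |].
  split; [apply Psin_pos; lra |]. unfold Psin.
  apply Rplus_lt_compat_l, Rmult_lt_compat_l; [lra |]. simpl. nra.
Qed.

Lemma xsub_0 : xsub q s 0 = 1.
Proof.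
  unfold xsub, Psin. rewrite sin_0. replace (1 + (s - 1) * 0 ^ 2) with 1 by ring.
  apply Rpower_1_l.
Qed.

Lemma xsub_PI2 : xsub q s (PI / 2) = Rpower s (1 / q).
Proof. unfold xsub, Psin. rewrite sin_PI2. f_equal. ring. Qed.

Lemma phinv_spec a : 1 < a < Rpower s (1 / q) ->
  0 < phinv q s a < PI / 2 /\ xsub q s (phinv q s a) = a.
Proof.
  intros Ha.
  assert (Haq : 1 < Rpower a q < s).
  { split; [apply Rpower_gt_1; lra |].
    rewrite <- (Rpower_inv_Rpower s q) by lra. apply Rlt_Rpower_l; lra. }
  set (u := (Rpower a q - 1) / (s - 1)).
  assert (Hu : 0 < u < 1).
  { unfold u. split; [apply Rdiv_lt_0_compat; lra |].
    apply (Rmult_lt_reg_r (s - 1)); [lra |]. unfold Rdiv. rewrite Rmult_assoc, Rinv_l; lra. }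
  assert (Hsu : 0 < sqrt u < 1).
  { split; [apply sqrt_lt_R0; lra |]. rewrite <- sqrt_1. apply sqrt_lt_1_alt; lra. }
  change (phinv q s a) with (asin (sqrt u)).
  assert (Hsin : sin (asin (sqrt u)) = sqrt u) by (apply sin_asin; lra).
  split.
  - assert (Hb := asin_bound_lt (sqrt u) ltac:(lra)). split; [| lra].
    apply sin_increasing_0; [lra .. |]. rewrite sin_0, Hsin. lra.
  - unfold xsub, Psin. rewrite Hsin.
    replace (1 + (s - 1) * sqrt u ^ 2) with (Rpower a q).
    + apply Rpower_Rpower_inv; lra.
    + rewrite <- Rsqr_pow2, Rsqr_sqrt by lra. unfold u. field. lra.
Qed.

Lemma is_RInt_Theta_mq_integrand a b :
  1 < a < Rpower s (1 / q) -> 1 < b < Rpower s (1 / q) ->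
  is_RInt (Theta_mq_integrand q s) a b (RInt (theta_sub q s) (phinv q s a) (phinv q s b)).
Proof.
  intros Ha Hb.
  destruct (phinv_spec a Ha) as [Hpa Hxa]. destruct (phinv_spec b Hb) as [Hpb Hxb].
  assert (Hphi : forall y,
    Rmin (phinv q s a) (phinv q s b) <= y <= Rmax (phinv q s a) (phinv q s b) -> 0 < y < PI / 2).
  { intros y Hy. split.
    - apply Rlt_le_trans with (2 := proj1 Hy), Rmin_glb_lt; lra.
    - apply Rle_lt_trans with (1 := proj2 Hy), Rmax_lub_lt; lra. }
  assert (Hx : forall x, Rmin a b <= x <= Rmax a b -> 1 < x < Rpower s (1 / q)).
  { intros x Hx. split.
    - apply Rlt_le_trans with (2 := proj1 Hx), Rmin_glb_lt; lra.
    - apply Rle_lt_trans with (1 := proj2 Hx), Rmax_lub_lt; lra. }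
  replace (RInt (theta_sub q s) (phinv q s a) (phinv q s b))
    with (RInt (Theta_mq_integrand q s) a b).
  - apply (RInt_correct (V := R_CompleteNormedModule)).
    apply (ex_RInt_continuous (V := R_CompleteNormedModule)). intros x Hxab.
    destruct (phinv_spec x (Hx x Hxab)) as [Hpx Hxx].
    rewrite <- Hxx. now apply continuous_Theta_mq_integrand_xsub.
  - transitivity (RInt (Theta_mq_integrand q s) (xsub q s (phinv q s a)) (xsub q s (phinv q s b)));
      [now rewrite Hxa, Hxb |].
    rewrite <- (RInt_comp (V := R_CompleteNormedModule) _ _ (dxsub q s)).
    + apply RInt_ext. intros y Hy. apply dxsub_mul_Theta_mq_integrand, Hphi. lra.
    + intros y Hy. now apply continuous_Theta_mq_integrand_xsub, Hphi.
    + intros y _. split; [apply is_derive_xsub | apply continuous_dxsub].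
Qed.

End Substitution.

Lemma is_RInt_gen_Theta_mq_integrand q s : 0 < q -> 1 < s ->
  is_RInt_gen (Theta_mq_integrand q s) (at_right 1) (at_left (Rpower s (1 / q)))
    (Theta_sub q s).
Proof.
  intros Hq Hs. assert (HPI := PI2_RGT_0).
  assert (Hr : 1 < Rpower s (1 / q)) by (apply Rpower_gt_1, Rdiv_lt_0_compat; lra).
  assert (Hinc := xsub_increasing q s Hq Hs).
  assert (Hinv : forall a, xsub q s 0 < a < xsub q s (PI / 2) ->
                      0 < phinv q s a < PI / 2 /\ xsub q s (phinv q s a) = a).
  { rewrite xsub_0, xsub_PI2. exact (phinv_spec q s Hq Hs). }
  assert (Hlim0 := filterlim_inverse_at_right _ _ 0 (PI / 2) HPI Hinc Hinv).
  assert (Hlim1 := filterlim_inverse_at_left _ _ 0 (PI / 2) HPI Hinc Hinv).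
  rewrite xsub_0 in Hlim0. rewrite xsub_PI2 in Hlim1.
  apply (filterlimi_lim_ext_loc
    (fun ab => RInt (theta_sub q s) (phinv q s (fst ab)) (phinv q s (snd ab)))).
  - apply (Filter_prod _ _ _ (fun a => 1 < a < Rpower s (1 / q))
                              (fun b => 1 < b < Rpower s (1 / q))).
    + exists (mkposreal (Rpower s (1 / q) - 1) ltac:(lra)). intros a Ha Ha1.
      change (Rabs (a - 1) < Rpower s (1 / q) - 1) in Ha. apply Rabs_def2 in Ha. lra.
    + exists (mkposreal (Rpower s (1 / q) - 1) ltac:(lra)). intros b Hb Hb1.
      change (Rabs (b - Rpower s (1 / q)) < Rpower s (1 / q) - 1) in Hb.
      apply Rabs_def2 in Hb. lra.
    + intros a b Ha Hb. now apply is_RInt_Theta_mq_integrand.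
  - apply (filterlim_comp_2 (G := locally 0) (H := locally (PI / 2))
             (fun ab => phinv q s (fst ab)) (fun ab => phinv q s (snd ab))
             (fun u v => RInt (theta_sub q s) u v)).
    + eapply filterlim_comp; [apply filterlim_fst | exact Hlim0].
    + eapply filterlim_comp; [apply filterlim_snd | exact Hlim1].
    + intros P HP.
      assert (Hc : continuous (fun z : R * R => RInt (theta_sub q s) (fst z) (snd z)) (0, PI / 2)).
      { apply (continuous_RInt (theta_sub q s) 0 (PI / 2)), filter_forall. intros z.
        apply (RInt_correct (V := R_CompleteNormedModule)), ex_RInt_theta_sub; lra. }
      destruct (Hc P HP) as [d Hd].
      apply (Filter_prod _ _ _ (ball 0 d) (ball (PI / 2) d)); [now exists d | now exists d |].
      intros u v Hu Hv. apply Hd. now split.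
Qed.

Lemma Theta_mq_eq q r : 0 < q -> 1 < r -> Theta (- q) q r = Theta_sub q (Rpower r q).
Proof.
  intros Hq Hr. assert (Hs := Rpower_gt_1 r q Hr Hq).
  unfold Theta. apply is_RInt_gen_unique.
  apply (is_RInt_gen_ext (Theta_mq_integrand q (Rpower r q))).
  - apply filter_forall. intros ab x _. symmetry. now apply Theta_integrand_mq.
  - rewrite <- (Rpower_Rpower_inv r q) at 2 by lra.
    now apply is_RInt_gen_Theta_mq_integrand.
Qed.

(** * Monotonicity of [Theta] in [r] *)

Definition Theta_mq_dr (q r : R) : R :=
  q * Rpower r (q - 1) * RInt (dtheta_sub q (Rpower r q)) 0 (PI / 2).

Lemma is_derive_Theta_mq q r : 0 < q -> 1 < r ->
  is_derive (fun s => Theta (- q) q s) r (Theta_mq_dr q r).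
Proof.
  intros Hq Hr. assert (Hs := Rpower_gt_1 r q Hr Hq).
  apply (is_derive_ext_loc (fun x => Theta_sub q (Rpower x q))).
  { apply (locally_open (fun x => 1 < x)); [apply open_gt | | exact Hr].
    intros x Hx. symmetry. now apply Theta_mq_eq. }
  unfold Theta_mq_dr.
  apply (is_derive_comp (Theta_sub q) (fun x => Rpower x q)).
  - apply is_derive_Theta_sub; lra.
  - apply is_derive_Rpower. lra.
Qed.

Lemma Theta_mq_dr_sign q r : 0 < q -> 1 < r ->
  (q < 2 -> Theta_mq_dr q r < 0) /\ (2 < q -> 0 < Theta_mq_dr q r).
Proof.
  intros Hq Hr. assert (Hs := Rpower_gt_1 r q Hr Hq).
  assert (Hk : 0 < q * Rpower r (q - 1))
    by (apply Rmult_lt_0_compat; [exact Hq | apply Rpower_pos]).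
  destruct (RInt_dtheta_sub_sign q (Rpower r q) Hq Hs) as [Hlt Hgt].
  unfold Theta_mq_dr.
  split; intros Hq2; [specialize (Hlt Hq2) | specialize (Hgt Hq2)]; nra.
Qed.

Theorem theorem6p1 (q : R) (hq : 0 < q) :
  (forall t z : R, 1 < t -> -1 < z < 1 ->
     (q < 2 -> exists l : R, is_derive (fun s => Jtilde_mq q s z) t l /\ l < 0) /\
     (2 < q -> exists l : R, is_derive (fun s => Jtilde_mq q s z) t l /\ 0 < l)) /\
  (forall r : R, 1 < r ->
     (q < 2 -> exists l : R, is_derive (fun s => Theta (- q) q s) r l /\ l < 0) /\
     (2 < q -> exists l : R, is_derive (fun s => Theta (- q) q s) r l /\ 0 < l)).
Proof.
  split.
  - intros t z Ht Hz.
    destruct (Jtilde_mq_dt_sign q t z hq Ht Hz) as [Hlt Hgt].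
    split; intros Hq2; exists (Jtilde_mq_dt q t z);
      split; auto using is_derive_Jtilde_mq.
  - intros r Hr.
    destruct (Theta_mq_dr_sign q r hq Hr) as [Hlt Hgt].
    split; intros Hq2; exists (Theta_mq_dr q r);
      split; auto using is_derive_Theta_mq.
Qed.
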